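(* Let $H$ and $G$ be finite simple graphs with $n=|V(H)|$, $\Delta=\Delta(H)\ge 1$ and $\delta=\delta(G)\ge 1$. Let $S\subseteq V(H)$ be a maximum $G$-free subset of $V(H)$, and for each integer $i\ge 0$ let $n_i(S)$ denote the number of vertices of $V(H)\setminus S$ having exactly $i$ neighbours in $S$. Then \[ n-\frac{\sum_{i=\delta}^{\Delta} i\, n_i(S)}{\delta}\ \le\ |S|\ \le\ n-\frac{\sum_{i=\delta}^{\Delta} i\, n_i(S)}{\Delta}.\]
   Context: All graphs are finite, simple and undirected. For $W\subseteq V(H)$, $H[W]$ denotes the induced subgraph on $W$. A set $S\subseteq V(H)$ is called $G$-free if $H[S]$ contains no subgraph isomorphic to $G$. A maximum $G$-free subset of $V(H)$ is a $G$-free subset $S\subseteq V(H)$ of largest possible cardinality. $\Delta(H)$ is the maximum degree of $H$, $\delta(G)$ the minimum degree of $G$. *)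

From mathcomp Require Import all_boot all_order all_algebra.
Set Implicit Arguments. Unset Strict Implicit. Unset Printing Implicit Defensive.

Definition simple_graph (T : finType) (e : rel T) : Prop :=
  symmetric e /\ irreflexive e.

Definition deg (T : finType) (e : rel T) (v : T) : nat := #|[set u | e v u]|.

(* maximum degree (0 for the empty graph) *)
Definition maxdeg (T : finType) (e : rel T) : nat := \max_(v : T) deg e v.

(* minimum degree; on a nonempty graph this is the true minimum, since every
   degree is < #|T|. *)
Definition mindeg (T : finType) (e : rel T) : nat :=
  \big[minn/#|T|]_(v : T) deg e v.

Definition contains_copy (TG TH : finType) (eG : rel TG) (eH : rel TH)
  (S : {set TH}) : Prop :=
  exists f : TG -> TH,
    [/\ injective f, (forall x, f x \in S) & (forall x y, eG x y -> eH (f x) (f y))].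

Definition G_free (TG TH : finType) (eG : rel TG) (eH : rel TH) (S : {set TH}) : Prop :=
  ~ contains_copy eG eH S.

Definition max_G_free (TG TH : finType) (eG : rel TG) (eH : rel TH) (S : {set TH}) : Prop :=
  G_free eG eH S /\ (forall S' : {set TH}, G_free eG eH S' -> #|S'| <= #|S|).

Definition n_i (TH : finType) (eH : rel TH) (S : {set TH}) (i : nat) : nat :=
  #|[set v in ~: S | #|[set u in S | eH v u]| == i]|.

From mathcomp Require Import all_boot all_order all_algebra.
Import Order.TTheory GRing.Theory Num.Theory.

Set Implicit Arguments. Unset Strict Implicit. Unset Printing Implicit Defensive.

(* Every vertex v outside a maximum G-free set S has at least delta(G)
   neighbours in S: otherwise no vertex of a copy of G in S + v could be mapped
   to v, so S + v would be G-free, contradicting maximality.  As v also has at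
   most Delta(H) neighbours in S, the number s of edges between S and its
   complement, which is the weighted sum of the n_i(S), satisfies
   delta (n - |S|) <= s <= Delta (n - |S|). *)

Definition nbrs_in (T : finType) (e : rel T) (S : {set T}) (v : T) : {set T} :=
  [set u in S | e v u].

Lemma mindeg_le (T : finType) (e : rel T) (x : T) : (mindeg e <= deg e x)%N.
Proof.
by rewrite /mindeg -Order.NatOrder.minEnat; have := bigmin_le #|T| x (deg e).
Qed.

Lemma card_nbrs_in_le_maxdeg (T : finType) (e : rel T) (S : {set T}) (v : T) :
  (#|nbrs_in e S v| <= maxdeg e)%N.
Proof.
apply: leq_trans (leq_bigmax v); apply: subset_leq_card.
by apply/subsetP => u; rewrite !inE => /andP[].
Qed.

Lemma sum_mul_card_level (T : finType) (P : {set T}) (f : T -> nat) (a b : nat) :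
  {in P, forall v, a <= f v < b}%N ->
  (\sum_(a <= i < b) i * #|[set v in P | f v == i]| = \sum_(v in P) f v)%N.
Proof.
move=> f_range.
under eq_bigr => i _.
  rewrite -sum1_card big_distrr /= big_mkcond /=.
  under eq_bigr => v _ do rewrite inE muln1.
  over.
rewrite exchange_big /= [RHS]big_mkcond; apply: eq_bigr => v _.
have [vP | _] /= := boolP (v \in P); last by rewrite big1.
rewrite -big_mkcond (eq_bigl (pred1 (f v))) => [|i]; last by rewrite /= eq_sym.
by rewrite big_nat1_eq f_range.
Qed.

Section GFree.

Variables (TG TH : finType) (eG : rel TG) (eH : rel TH).
Hypothesis eG_irrefl : irreflexive eG.

Lemma deg_le_nbrs_in_of_copy (S : {set TH}) (v : TH) (g : TG -> TH) (x : TG) :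
  injective g -> (forall y, g y \in v |: S) ->
  (forall y z, eG y z -> eH (g y) (g z)) -> g x = v ->
  (deg eG x <= #|nbrs_in eH S v|)%N.
Proof.
move=> g_inj g_in g_hom gx.
rewrite /deg -(card_imset _ g_inj); apply/subset_leq_card/subsetP => u.
case/imsetP => y; rewrite inE => exy ->.
have /setU1P[gyv | gyS] := g_in y.
  by move: exy; rewrite -gx in gyv; rewrite (g_inj _ _ gyv) eG_irrefl.
by rewrite inE gyS -gx g_hom.
Qed.

Lemma G_free_setU1 (S : {set TH}) (v : TH) :
  G_free eG eH S -> (#|nbrs_in eH S v| < mindeg eG)%N -> G_free eG eH (v |: S).
Proof.
move=> S_free few_nbrs [g [g_inj g_in g_hom]].
have [/existsP[x /eqP gx] | gNv] := boolP [exists x, g x == v].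
  have := leq_trans (mindeg_le eG x) (deg_le_nbrs_in_of_copy g_inj g_in g_hom gx).
  by rewrite leqNgt few_nbrs.
apply: S_free; exists g; split => // x.
have /setU1P[gxv | //] := g_in x.
by case/negP: gNv; apply/existsP; exists x; rewrite gxv.
Qed.

Lemma max_G_free_nbrs_in (S : {set TH}) (v : TH) :
  max_G_free eG eH S -> v \notin S -> (mindeg eG <= #|nbrs_in eH S v|)%N.
Proof.
move=> [S_free S_max] vNS; rewrite leqNgt; apply/negP => few_nbrs.
have := S_max _ (G_free_setU1 S_free few_nbrs).
by rewrite cardsU1 vNS ltnn.
Qed.

End GFree.

Lemma ler_div_nat (R : numFieldType) (s k d : nat) :
  (0 < d)%N -> (s <= d * k)%N -> (s%:R / d%:R <= k%:R :> R)%R.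
Proof. by move=> d_gt0 skd; rewrite ler_pdivrMr ?ltr0n // -natrM ler_nat mulnC. Qed.

Lemma ger_div_nat (R : numFieldType) (s k d : nat) :
  (0 < d)%N -> (d * k <= s)%N -> (k%:R <= s%:R / d%:R :> R)%R.
Proof. by move=> d_gt0 dks; rewrite ler_pdivlMr ?ltr0n // -natrM ler_nat mulnC. Qed.

Theorem theorem2p2 (TH TG : finType) (eH : rel TH) (eG : rel TG)
  (hH : simple_graph eH) (hG : simple_graph eG)
  (hDelta : (1 <= maxdeg eH)%N) (hdelta : (1 <= mindeg eG)%N)
  (S : {set TH}) (hS : max_G_free eG eH S) :
  let n := #|TH| in
  let Delta := maxdeg eH in
  let delta := mindeg eG in
  let s := (\sum_(delta <= i < Delta.+1) i * n_i eH S i)%N in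
  ((n%:R - s%:R / delta%:R <= #|S|%:R :> rat) /\
   (#|S|%:R <= n%:R - s%:R / Delta%:R :> rat))%R.
Proof.
move=> n Delta delta s.
have s_edges : s = (\sum_(v in ~: S) #|nbrs_in eH S v|)%N.
  apply: sum_mul_card_level => v; rewrite inE => vNS.
  by rewrite ltnS card_nbrs_in_le_maxdeg (max_G_free_nbrs_in hG.2 hS).
have card_compl : #|~: S| = (n - #|S|)%N by rewrite cardsCs setCK.
have s_ge : (delta * (n - #|S|) <= s)%N.
  rewrite s_edges -card_compl mulnC -sum_nat_const; apply: leq_sum => v vNS.
  by rewrite (max_G_free_nbrs_in hG.2 hS) // -in_setC.
have s_le : (s <= Delta * (n - #|S|))%N.
  rewrite s_edges -card_compl mulnC -sum_nat_const; apply: leq_sum => v _.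
  by rewrite card_nbrs_in_le_maxdeg.
have S_le_n : (#|S| <= n)%N by apply: max_card.
split.
  by rewrite lerBlDr -lerBlDl -natrB // ger_div_nat.
by rewrite lerBrDl -lerBrDr -natrB // ler_div_nat.
Qed.
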